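(* Identify the tangent space of $\mathbb OP^{(1,1)}$ at $P_0=[1,0,0]$ with $\mathbb O^2$ via the chart $[1,u,v]\mapsto(u,v)$, a pair $(a,b)$ corresponding to the tangent vector with $du=a$, $dv=b$. Then the Riemann curvature tensor of $(\mathbb OP^{(1,1)},g)$ at $P_0$ is $$\begin{aligned}R\big((a,b),(c,d),(e,f),(g,h)\big)=&\,4\langle a,e\rangle\langle c,g\rangle-4\langle c,e\rangle\langle a,g\rangle+4\langle b,f\rangle\langle d,h\rangle-4\langle d,f\rangle\langle b,h\rangle\\&+\langle e\bar d,g\bar b\rangle-\langle e\bar b,g\bar d\rangle+\langle c\bar f,a\bar h\rangle-\langle a\bar f,c\bar h\rangle+\langle a\bar d-c\bar b,\ g\bar f-e\bar h\rangle.\end{aligned}$$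
   Context: Octonions $\mathbb O=\mathbb H\oplus\mathbb H$ with product $(q_1,q_2)(p_1,p_2)=(q_1p_1-\bar p_2q_2,\ p_2q_1+q_2\bar p_1)$, conjugation $\overline{(q_1,q_2)}=(\bar q_1,-q_2)$, $\langle a,b\rangle=\mathrm{Re}(a\bar b)$, $|a|^2=\langle a,a\rangle$. $\mathbb OP^{(1,1)}=(U_1\cup U_2)/_\sim$ with $U_1=\{(1,u,v):1+|u|^2-|v|^2>0\}$, $U_2=\{(u,1,v):|u|^2+1-|v|^2>0\}$ and $[a,b,c]\sim[d,e,f]$ iff $(a,b,c)=(d\lambda,e\lambda,f\lambda)$ for some $\lambda\ne0$; charts $[1,u,v]\mapsto(u,v)$, $[u,1,v]\mapsto(u,v)$. Metric $g$ on each chart, for tangent vector $(du,dv)=(\xi,\eta)$: $ds^2=\frac{|\xi|^2(1-|v|^2)-|\eta|^2(1+|u|^2)+2\mathrm{Re}[(u\bar v)(\eta\bar\xi)]}{(1+|u|^2-|v|^2)^2}$. Curvature convention: in coordinates in which first derivatives of the metric vanish at the point, $R_{\alpha\beta\gamma\delta}=\tfrac12\big[\partial_\alpha\partial_\delta g_{\beta\gamma}+\partial_\beta\partial_\gamma g_{\alpha\delta}-\partial_\beta\partial_\delta g_{\alpha\gamma}-\partial_\alpha\partial_\gamma g_{\beta\delta}\big]$. *)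

From Stdlib Require Import Reals.
From Coquelicot Require Import Coquelicot.
Open Scope R_scope.

(* ---------- Quaternions H = R^4, basis 1,i,j,k with i^2=j^2=k^2=ijk=-1 ---------- *)
Record H := mkH { h0 : R; h1 : R; h2 : R; h3 : R }.

Definition hadd (p q : H) : H :=
  mkH (h0 p + h0 q) (h1 p + h1 q) (h2 p + h2 q) (h3 p + h3 q).
Definition hopp (p : H) : H := mkH (- h0 p) (- h1 p) (- h2 p) (- h3 p).
Definition hsub (p q : H) : H := hadd p (hopp q).
Definition hscale (r : R) (p : H) : H := mkH (r * h0 p) (r * h1 p) (r * h2 p) (r * h3 p).
Definition hmul (p q : H) : H :=
  mkH (h0 p * h0 q - h1 p * h1 q - h2 p * h2 q - h3 p * h3 q)
      (h0 p * h1 q + h1 p * h0 q + h2 p * h3 q - h3 p * h2 q)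
      (h0 p * h2 q - h1 p * h3 q + h2 p * h0 q + h3 p * h1 q)
      (h0 p * h3 q + h1 p * h2 q - h2 p * h1 q + h3 p * h0 q).
Definition hconj (p : H) : H := mkH (h0 p) (- h1 p) (- h2 p) (- h3 p).

(* ---------- Octonions O = H (+) H (Cayley-Dickson, as in the paper) ---------- *)
Record O := mkO { o1 : H; o2 : H }.

Definition oadd (a b : O) : O := mkO (hadd (o1 a) (o1 b)) (hadd (o2 a) (o2 b)).
Definition osub (a b : O) : O := mkO (hsub (o1 a) (o1 b)) (hsub (o2 a) (o2 b)).
Definition oscale (r : R) (a : O) : O := mkO (hscale r (o1 a)) (hscale r (o2 a)).
(* (q1,q2)(p1,p2) = (q1 p1 - conj(p2) q2, p2 q1 + q2 conj(p1)) *)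
Definition omul (a b : O) : O :=
  mkO (hsub (hmul (o1 a) (o1 b)) (hmul (hconj (o2 b)) (o2 a)))
      (hadd (hmul (o2 b) (o1 a)) (hmul (o2 a) (hconj (o1 b)))).
Definition oconj (a : O) : O := mkO (hconj (o1 a)) (hopp (o2 a)).
Definition oRe (a : O) : R := h0 (o1 a).
Definition oinner (a b : O) : R := oRe (omul a (oconj b)).
Definition onorm2 (a : O) : R := oinner a a.

Definition O2 := (O * O)%type.
Definition o2add (X Y : O2) : O2 := (oadd (fst X) (fst Y), oadd (snd X) (snd Y)).
Definition o2scale (r : R) (X : O2) : O2 := (oscale r (fst X), oscale r (snd X)).
Definition o2zero : O2 := let z := mkO (mkH 0 0 0 0) (mkH 0 0 0 0) in (z, z).

Definition ds2 (p X : O2) : R :=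
  let u := fst p in let v := snd p in let xi := fst X in let eta := snd X in
  (onorm2 xi * (1 - onorm2 v) - onorm2 eta * (1 + onorm2 u)
     + 2 * oRe (omul (omul u (oconj v)) (omul eta (oconj xi))))
  / (1 + onorm2 u - onorm2 v) ^ 2.

Definition gmet (p X Y : O2) : R :=
  (ds2 p (o2add X Y) - ds2 p X - ds2 p Y) / 2.

Definition dg (X Y Z : O2) : R :=
  Derive (fun s => gmet (o2scale s X) Y Z) 0.

Definition d2g (X W Y Z : O2) : R :=
  Derive (fun s => Derive (fun t => gmet (o2add (o2scale s X) (o2scale t W)) Y Z) 0) 0.

(* Curvature at P0 = [1,0,0] (chart point (0,0)) with the paper's convention
   R_{abcd} = 1/2 [d_a d_d g_bc + d_b d_c g_ad - d_b d_d g_ac - d_a d_c g_bd],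
   valid since the chart coordinates have vanishing first derivatives of g at 0
   (this is also asserted in the theorem). *)
Definition Rcurv0 (X Y Z W : O2) : R :=
  / 2 * (d2g X W Y Z + d2g Y Z X W - d2g Y W X Z - d2g X Z Y W).

From Stdlib Require Import Reals Lra.
From Coquelicot Require Import Coquelicot.
Open Scope R_scope.

(* In the chart, g_p(Y,Z) = (<Y,Z> + B(p,p;Y,Z)) / (1 + <p,p>)^2, where <.,.> is the flat
   form of signature (8,8) on O^2 and B is bilinear in p. Numerator and denominator have no
   terms linear in p, so the first derivatives of g vanish at the origin, and the mixed
   second derivative of g(Y,Z) along X and W is B(X,W) + B(W,X) - 4 <X,W> <Y,Z>. This is
   symmetric under exchanging the pairs (X,W) and (Y,Z), so the curvature reduces to
   d_X d_W g(Y,Z) - d_X d_Z g(Y,W); the stated formula then follows from four instances of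
   the polarized composition law <x conj y, z conj w> + <x conj w, z conj y> = 2 <x,z> <y,w>. *)

Ltac octonion_coords :=
  repeat match goal with x : O |- _ => destruct x as [[? ? ? ?] [? ? ? ?]] end;
  cbv beta iota delta [oinner onorm2 oRe omul oconj oadd osub oscale
                       hsub hadd hopp hmul hconj hscale h0 h1 h2 h3 o1 o2];
  first [ring | f_equal; f_equal; ring].

Lemma omul_addl a b c : omul (oadd a b) c = oadd (omul a c) (omul b c).
Proof. octonion_coords. Qed.
Lemma omul_addr a b c : omul a (oadd b c) = oadd (omul a b) (omul a c).
Proof. octonion_coords. Qed.
Lemma omul_scalel r a b : omul (oscale r a) b = oscale r (omul a b).
Proof. octonion_coords. Qed.
Lemma omul_scaler r a b : omul a (oscale r b) = oscale r (omul a b).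
Proof. octonion_coords. Qed.
Lemma oconj_add a b : oconj (oadd a b) = oadd (oconj a) (oconj b).
Proof. octonion_coords. Qed.
Lemma oconj_scale r a : oconj (oscale r a) = oscale r (oconj a).
Proof. octonion_coords. Qed.
Lemma oconjK a : oconj (oconj a) = a.
Proof. octonion_coords. Qed.
Lemma oconj_mul a b : oconj (omul a b) = omul (oconj b) (oconj a).
Proof. octonion_coords. Qed.
Lemma oRe_mul a b : oRe (omul a b) = oinner a (oconj b).
Proof. octonion_coords. Qed.

Lemma oinner_addl a b c : oinner (oadd a b) c = oinner a c + oinner b c.
Proof. octonion_coords. Qed.
Lemma oinner_addr a b c : oinner a (oadd b c) = oinner a b + oinner a c.
Proof. octonion_coords. Qed.
Lemma oinner_scalel r a b : oinner (oscale r a) b = r * oinner a b.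
Proof. octonion_coords. Qed.
Lemma oinner_scaler r a b : oinner a (oscale r b) = r * oinner a b.
Proof. octonion_coords. Qed.
Lemma oinner_subl a b c : oinner (osub a b) c = oinner a c - oinner b c.
Proof. octonion_coords. Qed.
Lemma oinner_subr a b c : oinner a (osub b c) = oinner a b - oinner a c.
Proof. octonion_coords. Qed.
Lemma oinnerC a b : oinner a b = oinner b a.
Proof. octonion_coords. Qed.

(* Polarization, in both factors, of the composition law |x conj y|^2 = |x|^2 |y|^2. *)
Lemma oinner_mul_conj_polar x y z w :
  oinner (omul x (oconj y)) (omul z (oconj w)) + oinner (omul x (oconj w)) (omul z (oconj y))
  = 2 * oinner x z * oinner y w.
Proof. octonion_coords. Qed.

Definition bilinear (f : O2 -> O2 -> R) : Prop :=
  (forall X X' W, f (o2add X X') W = f X W + f X' W) /\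
  (forall r X W, f (o2scale r X) W = r * f X W) /\
  (forall X W W', f X (o2add W W') = f X W + f X W') /\
  (forall r X W, f X (o2scale r W) = r * f X W).

Lemma bilinear_line f s X : bilinear f -> f (o2scale s X) (o2scale s X) = s ^ 2 * f X X.
Proof. intros (_ & Hsl & _ & Hsr). rewrite Hsl, Hsr. ring. Qed.

Lemma bilinear_plane f s t X W : bilinear f ->
  let P := o2add (o2scale s X) (o2scale t W) in
  f P P = s ^ 2 * f X X + s * t * (f X W + f W X) + t ^ 2 * f W W.
Proof. intros (Hl & Hsl & Hr & Hsr). simpl. rewrite Hl, !Hr, !Hsl, !Hsr. ring. Qed.

Ltac expand_bilinear :=
  unfold o2add, o2scale; cbn [fst snd];
  rewrite ?oconj_add, ?oconj_scale, ?omul_addl, ?omul_addr, ?omul_scalel, ?omul_scaler,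
    ?oinner_addl, ?oinner_addr, ?oinner_scalel, ?oinner_scaler; ring.

Definition o2form (X Y : O2) : R := oinner (fst X) (fst Y) - oinner (snd X) (snd Y).

Lemma o2formC X Y : o2form X Y = o2form Y X.
Proof. unfold o2form. rewrite (oinnerC (fst X)), (oinnerC (snd X)). reflexivity. Qed.

Lemma o2form_bilinear : bilinear o2form.
Proof. unfold o2form; repeat split; intros; expand_bilinear. Qed.

Definition metric_num_bilin (X W Y Z : O2) : R :=
  - oinner (fst Y) (fst Z) * oinner (snd X) (snd W)
  - oinner (snd Y) (snd Z) * oinner (fst X) (fst W)
  + oinner (omul (fst X) (oconj (snd W))) (omul (fst Z) (oconj (snd Y)))
  + oinner (omul (fst X) (oconj (snd W))) (omul (fst Y) (oconj (snd Z))).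

Lemma metric_num_bilin_bilinear Y Z : bilinear (fun X W => metric_num_bilin X W Y Z).
Proof. unfold metric_num_bilin; repeat split; intros; expand_bilinear. Qed.

Lemma gmetE p Y Z :
  gmet p Y Z = (o2form Y Z + metric_num_bilin p p Y Z) / (1 + o2form p p) ^ 2.
Proof.
  destruct p as [u v], Y as [y1 y2], Z as [z1 z2].
  unfold gmet, ds2, metric_num_bilin, o2form, onorm2, o2add; cbn [fst snd].
  rewrite !oRe_mul, !oconj_mul, !oconjK, !oconj_add, !omul_addl, !omul_addr,
    !oinner_addl, !oinner_addr, (oinnerC z1 y1), (oinnerC z2 y2).
  unfold Rdiv.
  replace (1 + (oinner u u - oinner v v)) with (1 + oinner u u - oinner v v) by ring.
  (* Hide the possibly vanishing denominator, so that [field] only has to clear the 2. *)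
  set (k := / (1 + oinner u u - oinner v v) ^ 2). field.
Qed.

Lemma locally_quad_neq0 a : locally 0 (fun s => 1 + s ^ 2 * a <> 0).
Proof.
  assert (Hcont : continuous (fun s => 1 + s ^ 2 * a) 0).
  { apply (ex_derive_continuous (V := R_NormedModule)). auto_derive. exact I. }
  apply (Hcont (fun u => u <> 0)), open_neq. lra.
Qed.

Lemma Derive_even_quotient A al a :
  Derive (fun s => (A + s ^ 2 * al) / (1 + s ^ 2 * a) ^ 2) 0 = 0.
Proof.
  apply is_derive_unique.
  auto_derive; replace (1 + 0 * (0 * 1) * a) with 1 by ring; [lra | field].
Qed.

Lemma Derive_mixed_quotient A al be ga a b c :
  Derive (fun s => Derive (fun t =>
      (A + (s ^ 2 * al + s * t * be + t ^ 2 * ga))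
      / (1 + (s ^ 2 * a + s * t * b + t ^ 2 * c)) ^ 2) 0) 0
  = be - 2 * A * b.
Proof.
  assert (Hinner : forall s, 1 + s ^ 2 * a <> 0 ->
    Derive (fun t => (A + (s ^ 2 * al + s * t * be + t ^ 2 * ga))
                     / (1 + (s ^ 2 * a + s * t * b + t ^ 2 * c)) ^ 2) 0
    = (s * be * (1 + s ^ 2 * a) - 2 * (A + s ^ 2 * al) * (s * b)) / (1 + s ^ 2 * a) ^ 3).
  { intros s Hs. apply is_derive_unique.
    auto_derive;
      replace (1 + (s * (s * 1) * a + s * 0 * b + 0 * (0 * 1) * c)) with (1 + s ^ 2 * a) by ring.
    - rewrite Rmult_1_r. apply Rmult_integral_contrapositive_currified; exact Hs.
    - field. exact Hs. }
  rewrite (Derive_ext_loc _ (fun s =>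
    (s * be * (1 + s ^ 2 * a) - 2 * (A + s ^ 2 * al) * (s * b)) / (1 + s ^ 2 * a) ^ 3)).
  - apply is_derive_unique.
    auto_derive; replace (1 + 0 * (0 * 1) * a) with 1 by ring; [lra | field].
  - apply (filter_imp _ _ Hinner), locally_quad_neq0.
Qed.

Lemma dg_eq0 X Y Z : dg X Y Z = 0.
Proof.
  unfold dg.
  rewrite (Derive_ext _ (fun s => (o2form Y Z + s ^ 2 * metric_num_bilin X X Y Z)
                                  / (1 + s ^ 2 * o2form X X) ^ 2)).
  - apply Derive_even_quotient.
  - intro s. rewrite gmetE, (bilinear_line _ s X o2form_bilinear).
    rewrite (bilinear_line _ s X (metric_num_bilin_bilinear Y Z)). reflexivity.
Qed.

Lemma d2gE X W Y Z :
  d2g X W Y Z = metric_num_bilin X W Y Z + metric_num_bilin W X Y Z - 4 * o2form X W * o2form Y Z.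
Proof.
  unfold d2g.
  rewrite (Derive_ext _ (fun s => Derive (fun t =>
      (o2form Y Z + (s ^ 2 * metric_num_bilin X X Y Z
         + s * t * (metric_num_bilin X W Y Z + metric_num_bilin W X Y Z)
         + t ^ 2 * metric_num_bilin W W Y Z))
      / (1 + (s ^ 2 * o2form X X + s * t * (o2form X W + o2form W X) + t ^ 2 * o2form W W)) ^ 2) 0)).
  - rewrite Derive_mixed_quotient, (o2formC W X). ring.
  - intro s. apply Derive_ext. intro t.
    rewrite gmetE, (bilinear_plane _ s t X W o2form_bilinear).
    rewrite (bilinear_plane _ s t X W (metric_num_bilin_bilinear Y Z)). reflexivity.
Qed.

Lemma d2g_swap_pairs X W Y Z : d2g X W Y Z = d2g Y Z X W.
Proof.
  destruct X as [x1 x2], W as [w1 w2], Y as [y1 y2], Z as [z1 z2].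
  rewrite !d2gE. unfold metric_num_bilin, o2form; cbn [fst snd].
  rewrite (oinnerC w1 x1), (oinnerC w2 x2), (oinnerC z1 y1), (oinnerC z2 y2),
    !(oinnerC (omul y1 (oconj z2))), !(oinnerC (omul z1 (oconj y2))).
  ring.
Qed.

Lemma Rcurv0_d2g X Y Z W : Rcurv0 X Y Z W = d2g X W Y Z - d2g X Z Y W.
Proof. unfold Rcurv0. rewrite (d2g_swap_pairs Y Z), (d2g_swap_pairs Y W). field. Qed.

Theorem corollary7p5 :
  (forall X Y Z : O2, dg X Y Z = 0) /\
  (forall a b c d e f g h : O,
     Rcurv0 (a, b) (c, d) (e, f) (g, h) =
       4 * oinner a e * oinner c g - 4 * oinner c e * oinner a g
     + 4 * oinner b f * oinner d h - 4 * oinner d f * oinner b h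
     + oinner (omul e (oconj d)) (omul g (oconj b))
     - oinner (omul e (oconj b)) (omul g (oconj d))
     + oinner (omul c (oconj f)) (omul a (oconj h))
     - oinner (omul a (oconj f)) (omul c (oconj h))
     + oinner (osub (omul a (oconj d)) (omul c (oconj b)))
              (osub (omul g (oconj f)) (omul e (oconj h)))).
Proof.
  split; [exact dg_eq0 |].
  intros.
  rewrite Rcurv0_d2g, !d2gE. unfold metric_num_bilin, o2form; cbn [fst snd].
  rewrite oinner_subl, !oinner_subr, (oinnerC h b), (oinnerC g a), (oinnerC f b), (oinnerC e a),
    (oinnerC (omul e (oconj d))), (oinnerC (omul c (oconj f))).
  pose proof (oinner_mul_conj_polar a h e d) as Pahed.
  pose proof (oinner_mul_conj_polar a f g d) as Pafgd.
  pose proof (oinner_mul_conj_polar g b c f) as Pgbcf.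
  pose proof (oinner_mul_conj_polar e b c h) as Pebch.
  rewrite (oinnerC h d) in Pahed. rewrite (oinnerC f d) in Pafgd.
  rewrite (oinnerC g c), (oinnerC (omul g (oconj f))) in Pgbcf.
  rewrite (oinnerC e c), (oinnerC (omul e (oconj h))) in Pebch.
  lra.
Qed.
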